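(* For each $g \geq 2$ there exists $A \in \mathrm{Sp}(2g,\mathbb{Z})$ whose leading eigenvalue is bi-Perron but none of whose eigenvalues is simple. Moreover, there are infinitely many such matrices $A$.
   Context: $\mathrm{Sp}(2g,\mathbb{Z}) = \{A \in \mathrm{GL}(2g,\mathbb{Z}) : A^t J A = J\}$, where $J$ is the $2g\times 2g$ matrix with $J_{ij} = \delta_{i(j-1)} - \delta_{(i-1)j}$. The leading eigenvalue of a matrix is its eigenvalue of largest modulus. An algebraic integer $\lambda > 1$ is bi-Perron if all its Galois conjugates lie in the annulus $\{z \in \mathbb{C} : 1/\lambda \le |z| \le \lambda\}$. An eigenvalue is simple if it is a simple root of the characteristic polynomial. *)

From mathcomp Require Import all_boot all_order all_algebra all_field.
Set Implicit Arguments. Unset Strict Implicit. Unset Printing Implicit Defensive.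
Import Order.TTheory GRing.Theory Num.Theory.
Local Open Scope ring_scope.

Definition Jmat (n : nat) : 'M[int]_n :=
  \matrix_(i < n, j < n) (((i.+1 == j :> nat)%:R : int) - ((i == j.+1 :> nat)%:R : int)).

Definition symplectic (g : nat) (A : 'M[int]_(2 * g)) : Prop :=
  A \in unitmx /\ A^T *m Jmat (2 * g) *m A = Jmat (2 * g).

Definition cpC (n : nat) (A : 'M[int]_n) : {poly algC} :=
  char_poly (map_mx intr A).

Definition eigenvalue_of (n : nat) (A : 'M[int]_n) (z : algC) : Prop :=
  root (cpC A) z.

Definition simple_eigenvalue (n : nat) (A : 'M[int]_n) (z : algC) : Prop :=
  root (cpC A) z /\ mup z (cpC A) = 1%N.

Definition leading_eigenvalue (n : nat) (A : 'M[int]_n) (lam : algC) : Prop :=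
  eigenvalue_of A lam /\
  forall mu, eigenvalue_of A mu -> mu != lam -> `|mu| < `|lam|.

Definition galois_conjugate (x z : algC) : Prop := root (minCpoly x) z.

Definition bi_perron (lam : algC) : Prop :=
  lam \in Aint /\ 1 < lam /\
  forall z, galois_conjugate lam z -> lam^-1 <= `|z| /\ `|z| <= lam.

Definition thm_prop (g : nat) (A : 'M[int]_(2 * g)) : Prop :=
  symplectic A /\
  (exists lam, leading_eigenvalue A lam /\ bi_perron lam) /\
  (forall z, eigenvalue_of A z -> ~ simple_eigenvalue A z).

From mathcomp Require Import all_boot all_order all_algebra all_field.
From mathcomp Require Import ring zify.
Set Implicit Arguments. Unset Strict Implicit. Unset Printing Implicit Defensive.
Import Order.TTheory GRing.Theory Num.Theory.
Local Open Scope ring_scope.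

(* For an integer t >= 3 let C_t = [[t, -1], [1, 0]]: its characteristic
   polynomial x^2 - t x + 1 has the roots lam = (t + sqrt(t^2 - 4))/2 > 1 and
   1/lam, so lam is bi-Perron.  The 4 x 4 matrix B_t = [[C_t, Y], [0, C_t]]
   preserves J_4, and the unipotent extension [[B_t, X], [0, 1]] preserves
   J_(2g) once X absorbs the coupling of J between coordinates 4 and 5.  Its
   characteristic polynomial (x^2 - t x + 1)^2 (x - 1)^(2g - 4) is a square, so
   no eigenvalue is simple, and lam is the leading eigenvalue.  The corner
   entry t can be chosen outside any finite set. *)

Definition Jcoupling (a b : nat) : 'M[int]_(a, b) :=
  \matrix_(i < a, j < b) ((i == a.-1 :> nat) && (j == 0 :> nat))%:R.

Lemma Jmat_block a b : (0 < a)%N ->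
  Jmat (a + b) = block_mx (Jmat a) (Jcoupling a b) (- (Jcoupling a b)^T) (Jmat b).
Proof.
move=> a_gt0; apply/matrixP => i j.
case: (split_ordP i) => i' ->; case: (split_ordP j) => j' ->;
  rewrite ?block_mxEul ?block_mxEur ?block_mxEdl ?block_mxEdr !mxE /=;
  have := ltn_ord i'; have := ltn_ord j'.
all: by repeat case: eqP; lia.
Qed.

Lemma ublock_preserves_form (R : pzRingType) n1 n2
    (P : 'M[R]_n1) (Y : 'M[R]_(n1, n2)) (Q : 'M[R]_n2)
    (J1 : 'M[R]_n1) (K : 'M[R]_(n1, n2)) (J2 : 'M[R]_n2) :
  P^T *m J1 *m P = J1 ->
  P^T *m (J1 *m Y + K *m Q) = K ->
  Y^T *m J1 *m P - Q^T *m K^T *m P = - K^T ->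
  Y^T *m J1 *m Y - Q^T *m K^T *m Y + Y^T *m K *m Q + Q^T *m J2 *m Q = J2 ->
  (block_mx P Y 0 Q)^T *m block_mx J1 K (- K^T) J2 *m block_mx P Y 0 Q
    = block_mx J1 K (- K^T) J2.
Proof.
move=> ul ur dl dr; rewrite tr_block_mx trmx0 !mulmx_block !mul0mx !mulmx0 !addr0.
congr block_mx => //.
- by rewrite -[RHS]ur mulmxDr !mulmxA.
- by rewrite -[RHS]dl mulmxDl mulmxN mulNmx ?mulmxA.
- by rewrite -[RHS]dr !mulmxDl mulmxN mulNmx ?mulmxA !addrA.
Qed.

Lemma char_poly_ublock (R : comNzRingType) n1 n2
    (P : 'M[R]_n1) (Y : 'M[R]_(n1, n2)) (Q : 'M[R]_n2) :
  char_poly (block_mx P Y 0 Q) = char_poly P * char_poly Q.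
Proof.
rewrite /char_poly /char_poly_mx map_block_mx map_mx0 scalar_mx_block.
by rewrite opp_block_mx add_block_mx oppr0 addr0 sub0r det_ublock.
Qed.

Lemma det_mx22 (R : comNzRingType) (M : 'M[R]_2) :
  \det M = M 0 0 * M 1 1 - M 0 1 * M 1 0.
Proof.
rewrite (expand_det_row _ 0) !big_ord_recr big_ord0 /= add0r /cofactor !det_mx11.
rewrite !mxE /= expr0 expr1 mul1r mulN1r mulrN.
by congr (M _ _ * M _ _ - M _ _ * M _ _); apply: val_inj.
Qed.

Lemma mup_sqr (F : fieldType) (q : {poly F}) x : q != 0 -> mup x (q ^+ 2) = (mup x q).*2.
Proof. by move=> q_neq0; rewrite expr2 mupM // addnn. Qed.

Lemma char_poly_sqr_no_simple n (A : 'M[int]_n) (q : {poly int}) :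
  q \is monic -> char_poly A = q ^+ 2 -> forall z, ~ simple_eigenvalue A z.
Proof.
move=> q_monic cpA z [_]; rewrite /cpC -map_char_poly cpA rmorphXn.
by rewrite mup_sqr ?monic_neq0 ?monic_map // => /(congr1 odd); rewrite odd_double.
Qed.

Lemma root_exp_root (R : idomainType) (p : {poly R}) n x : root (p ^+ n) x -> root p x.
Proof. by rewrite /root horner_exp expf_eq0 => /andP[]. Qed.

Lemma galois_conjugate_root (p : {poly int}) (x z : algC) :
  root (map_poly intr p) x -> galois_conjugate x z -> root (map_poly intr p) z.
Proof.
rewrite /galois_conjugate; have [q [-> _] q_min] := minCpolyP x.
have pQ : map_poly intr p = map_poly ratr (map_poly intr p : {poly rat}) :> {poly algC}.
  by rewrite -map_poly_comp; apply: eq_map_poly => c /=; rewrite ratr_int.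
by rewrite pQ q_min => q_dvd_p; apply: root_dvdp; rewrite dvdp_map.
Qed.

Lemma bi_perron_root (p : {poly int}) (lam : algC) :
  p \is monic -> root (map_poly intr p) lam -> 1 < lam ->
  (forall z, root (map_poly intr p) z -> lam^-1 <= `|z| <= lam) -> bi_perron lam.
Proof.
move=> p_monic p_lam lam_gt1 p_annulus; split; last split=> // z conj_z.
  apply: root_monic_Aint p_lam (monic_map _ p_monic) _.
  by apply/polyOverP => i; rewrite coef_map intr_int.
by apply/andP/p_annulus/(galois_conjugate_root p_lam).
Qed.

Definition quadpoly (t : int) : {poly int} := 'X^2 - t%:P * 'X + 1.

Definition Bentry (t : int) (i j : nat) : int :=
  match i, j with
  | 0, 0 => t | 0, 1 => -1 | 0, 3 => -1
  | 1, 0 => 1 | 1, 2 => -1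
  | 2, 2 => t | 2, 3 => -1
  | 3, 2 => 1
  | _, _ => 0
  end.

Definition Bmx (t : int) : 'M[int]_(2 + 2) := \matrix_(i, j) Bentry t i j.

Definition Cmx (t : int) : 'M[int]_2 := ulsubmx (Bmx t).

Lemma Bmx_symplectic t : (Bmx t)^T *m Jmat 4 *m Bmx t = Jmat 4.
Proof.
apply/matrixP => i j; rewrite !(mxE, big_ord_recr, big_ord0) /=.
by move: i j => -[[|[|[|[|//]]]] lt_i] [[|[|[|[|//]]]] lt_j] /=; lia.
Qed.

Lemma Bmx_ublock t : Bmx t = block_mx (Cmx t) (ursubmx (Bmx t)) 0 (Cmx t).
Proof.
rewrite -[LHS]submxK; congr block_mx; apply/matrixP => -[[|[|i]] lt_i] [[|[|j]] lt_j] //.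
all: by rewrite !mxE.
Qed.

Lemma char_poly_Cmx t : char_poly (Cmx t) = quadpoly t.
Proof.
rewrite /char_poly det_mx22 !mxE /= ?(mulr1n, mulr0n, subr0, sub0r) polyCN polyC1.
by rewrite /quadpoly; ring.
Qed.

Lemma quadpoly_monic t : quadpoly t \is monic.
Proof. by rewrite -char_poly_Cmx char_poly_monic. Qed.

Lemma char_poly_Bmx t : char_poly (Bmx t) = quadpoly t ^+ 2.
Proof. by rewrite Bmx_ublock char_poly_ublock char_poly_Cmx. Qed.

Lemma det_Bmx t : \det (Bmx t) = 1.
Proof. by rewrite Bmx_ublock det_ublock det_mx22 !mxE /=; lia. Qed.

(* The first column of X is J_4^-1 (B_t^-T - 1) e_4, which solves the
   off-diagonal condition of ublock_preserves_form for the coupling of J. *)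
Definition Xmx (t : int) (m : nat) : 'M[int]_(4, m) :=
  \matrix_(i, j) ((j == 0 :> nat)%:R * [:: 1 - t; 0; 1 - t; -1]`_i).

Definition Amx (t : int) (m : nat) : 'M[int]_(4 + m) := block_mx (Bmx t) (Xmx t m) 0 1%:M.

Lemma Amx_symplectic t m : (Amx t m)^T *m Jmat (4 + m) *m Amx t m = Jmat (4 + m).
Proof.
rewrite (@Jmat_block 4 m) //; apply: ublock_preserves_form;
  rewrite ?trmx1 ?mul1mx ?mulmx1; first exact: Bmx_symplectic.
all: apply/matrixP => i j; rewrite !(mxE, big_ord_recr, big_ord0) /=.
- by move: i j => -[[|[|[|[|//]]]] lt_i] [[|j] lt_j] /=; lia.
- by move: i j => -[[|i] lt_i] [[|[|[|[|//]]]] lt_j] /=; lia.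
- by move: i j => -[[|i] lt_i] [[|j] lt_j] /=; lia.
Qed.

Lemma Amx_unit t m : Amx t m \in unitmx.
Proof. by rewrite unitmxE det_ublock det_Bmx det1 mulr1 unitr1. Qed.

Lemma char_poly_Amx t m : char_poly (Amx t m) = quadpoly t ^+ 2 * ('X - 1) ^+ m.
Proof.
rewrite char_poly_ublock char_poly_Bmx char_poly_trig ?scalar_mx_is_trig //.
under eq_bigr do rewrite mxE eqxx mulr1n.
by rewrite prodr_const card_ord.
Qed.

Lemma char_poly_Amx_sqr t m : ~~ odd m ->
  char_poly (Amx t m) = (quadpoly t * ('X - 1) ^+ m./2) ^+ 2.
Proof. by move=> m_even; rewrite char_poly_Amx exprMn -exprM muln2 even_halfK. Qed.

Lemma Amx_no_simple_eigenvalue t m z : ~~ odd m -> ~ simple_eigenvalue (Amx t m) z.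
Proof.
move=> m_even; apply: char_poly_sqr_no_simple (char_poly_Amx_sqr t m_even) z.
by rewrite monicMl ?quadpoly_monic // monic_exp // -polyC1 monicXsubC.
Qed.

Lemma cpC_Amx t m : cpC (Amx t m) = map_poly intr (quadpoly t) ^+ 2 * ('X - 1) ^+ m.
Proof.
by rewrite /cpC -map_char_poly char_poly_Amx rmorphM !rmorphXn rmorphB /= map_polyX rmorph1.
Qed.

Definition quad_root (t : int) : algC := (t%:~R + sqrtC (t ^+ 2 - 4)%:~R) / 2.

Section QuadRoot.

Variable t : int.
Hypothesis t_gt2 : 2 < t.
Local Notation lam := (quad_root t).

Lemma quad_root_gt1 : 1 < lam.
Proof.
rewrite ltr_pdivlMr ?ltr0n // mul1r ltr_wpDr //.
  by rewrite sqrtC_ge0 ler0z expr2; nia.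
by rewrite (_ : 2 = 2%:~R) // ltr_int.
Qed.

Lemma quad_root_neq0 : lam != 0.
Proof. by rewrite gt_eqF // (lt_trans ltr01 quad_root_gt1). Qed.

Lemma quad_rootV : lam^-1 = t%:~R - lam.
Proof.
have lam_conj : lam * (t%:~R - lam) = 1.
  rewrite /quad_root; set s := sqrtC _.
  have -> : (t%:~R + s) / 2 * (t%:~R - (t%:~R + s) / 2) = (t%:~R ^+ 2 - s ^+ 2) / 4.
    by field.
  by rewrite sqrtCK rmorphB rmorphXn /=; field.
by rewrite -[RHS](mulKf quad_root_neq0) lam_conj mulr1.
Qed.

Lemma map_quadpoly : map_poly intr (quadpoly t) = ('X - lam%:P) * ('X - lam^-1%:P).
Proof.
have sum_lam : lam + lam^-1 = t%:~R by rewrite quad_rootV addrC subrK.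
have prod_lam : lam * lam^-1 = 1 by rewrite mulfV ?quad_root_neq0.
have -> : forall a b : algC,
    ('X - a%:P) * ('X - b%:P) = 'X^2 - (a + b)%:P * 'X + (a * b)%:P.
  by move=> a b; rewrite polyCD polyCM; ring.
rewrite sum_lam prod_lam /quadpoly rmorphD rmorphB !rmorphM rmorph1 /=.
by rewrite map_polyX map_polyC polyC1 expr2.
Qed.

Lemma root_quadpoly z : root (map_poly intr (quadpoly t)) z = (z == lam) || (z == lam^-1).
Proof. by rewrite map_quadpoly rootM !root_XsubC. Qed.

Lemma quad_root_bi_perron : bi_perron lam.
Proof.
have lam_gt1 := quad_root_gt1; have lam_gt0 := lt_trans ltr01 lam_gt1.
have lamV_le : lam^-1 <= lam by rewrite (le_trans _ (ltW lam_gt1)) // ltW // invf_lt1.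
apply: (bi_perron_root (quadpoly_monic t)); rewrite ?root_quadpoly ?eqxx //.
by move=> z; rewrite root_quadpoly => /orP[] /eqP ->; rewrite ?normfV gtr0_norm ?lexx ?lamV_le.
Qed.

Variable m : nat.

Lemma eigenvalue_Amx z :
  eigenvalue_of (Amx t m) z -> [\/ z = lam, z = lam^-1 | z = 1].
Proof.
rewrite /eigenvalue_of cpC_Amx rootM => /orP[] /root_exp_root.
  by rewrite root_quadpoly => /orP[] /eqP ->; [constructor 1 | constructor 2].
by rewrite -polyC1 root_XsubC => /eqP ->; constructor 3.
Qed.

Lemma leading_Amx : leading_eigenvalue (Amx t m) lam.
Proof.
have lam_gt1 := quad_root_gt1; have lam_gt0 := lt_trans ltr01 lam_gt1.
split=> [|z /eigenvalue_Amx [] -> //]; rewrite ?eqxx ?normr1 ?normfV ?gtr0_norm //.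
- by rewrite /eigenvalue_of cpC_Amx rootM expr2 rootM root_quadpoly eqxx.
- by move=> _; rewrite (lt_trans _ lam_gt1) // invf_lt1.
Qed.

End QuadRoot.

(* [thm_prop A] is convertible to [thm_propn A] at [n = 2 * g]; a generic dimension
   is needed to write it as [4 + m]. *)
Definition thm_propn n (A : 'M[int]_n) : Prop :=
  (A \in unitmx /\ A^T *m Jmat n *m A = Jmat n) /\
  (exists lam, leading_eigenvalue A lam /\ bi_perron lam) /\
  (forall z, eigenvalue_of A z -> ~ simple_eigenvalue A z).

Lemma Amx_thm_propn t m : 2 < t -> ~~ odd m -> thm_propn (Amx t m).
Proof.
move=> t_gt2 m_even; split; last split.
- by split; [exact: Amx_unit | exact: Amx_symplectic].
- by exists (quad_root t); split; [exact: leading_Amx | exact: quad_root_bi_perron].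
- by move=> z _; exact: Amx_no_simple_eigenvalue.
Qed.

Lemma Amx_corner t m : Amx t m (lshift m 0) (lshift m 0) = t.
Proof. by rewrite block_mxEul mxE. Qed.

Lemma exists_nat_notin (s : seq nat) b : exists2 n, (b <= n)%N & n \notin s.
Proof.
exists (maxn b (\max_(x <- s) x).+1); first exact: leq_maxl.
apply/negP => /(@leq_bigmax_seq _ s xpredT id) /(_ isT); rewrite leqNgt.
by rewrite (leq_trans _ (leq_maxr _ _)).
Qed.

Lemma infinitely_many_thm_propn n : (4 <= n)%N -> ~~ odd n ->
  forall s : seq 'M[int]_n, exists A : 'M[int]_n, thm_propn A /\ A \notin s.
Proof.
move=> n_ge4 n_even s; have [m n_eq] : exists m, n = (4 + m)%N by exists (n - 4)%N; lia.
subst n; move: n_even; rewrite oddD /= => m_even.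
pose corners := [seq absz (M (lshift m 0) (lshift m 0)) | M : 'M_(4 + m) <- s].
have [k k_ge3 k_fresh] := exists_nat_notin corners 3.
exists (Amx k m); split; first exact: Amx_thm_propn.
by apply: contra k_fresh => A_in; apply/mapP; exists (Amx k m); rewrite ?Amx_corner.
Qed.

Theorem theorem1p4 (g : nat) (hg : (2 <= g)%N) :
  forall s : seq 'M[int]_(2 * g), exists A : 'M[int]_(2 * g), thm_prop A /\ A \notin s.
Proof. by apply: infinitely_many_thm_propn; rewrite ?oddM //; lia. Qed.
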